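(* Let $D_n=A_n$, $E_n=-B_n$, $F_n=C_n$. There is a constant $C>0$, independent of $n$, such that for every $n\in\mathbb N$ and every $t\in[0,T]$: $$\max\Big\{|D_n(t)|^2,|D_n'(t)|^2,\Big|\tfrac{D_n''(t)}{\lambda_n^{1/2}}\Big|^2,\Big|\tfrac{D_n''(t)}{\lambda_n^{3/2}}\Big|^2\Big\}\le C,\qquad \max\Big\{|E_n(t)|^2,|E_n'(t)|^2,\Big|\tfrac{E_n''(t)}{\lambda_n^{1/2}}\Big|^2,\Big|\tfrac{E_n''(t)}{\lambda_n^{3/2}}\Big|^2\Big\}\le C,$$ $$\max\Big\{|\lambda_n^{1/2}F_n(t)|^2,|\lambda_nF_n(t)|^2,|\lambda_n^{1/2}F_n'(t)|^2,|F_n''(t)|^2,\Big|\tfrac{F_n''(t)}{\lambda_n^{1/2}}\Big|^2\Big\}\le C.$$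
   Context: Setting: $0<s<1$, $\Omega\subset\mathbb R^N$ bounded open with Lipschitz boundary, $T>0$, real $\alpha,b,c$ with $b>0$ and $\gamma:=\alpha-c^2/b>0$. $0<\lambda_1\le\lambda_2\le\dots\to\infty$ are the eigenvalues of the Dirichlet fractional Laplacian $(-\Delta)_D^s$ on $\Omega$ (realization of $(-\Delta)^s$ in $L^2(\Omega)$ with zero exterior condition). For each $n$, $\lambda_{n,1},\lambda_{n,2},\lambda_{n,3}$ are the roots of $z^3+\alpha z^2+b\lambda_nz+c^2\lambda_n=0$; $\lambda_{n,1}$ is real and $\lambda_{n,3}=\overline{\lambda_{n,2}}$ is non-real, all with negative real parts, and as $n\to\infty$: $\lambda_{n,1}\to-c^2/b$, $\mathrm{Re}\,\lambda_{n,2}\to-\gamma/2$, $|\mathrm{Im}\,\lambda_{n,2}|\sim\sqrt{b\lambda_n}$. $\xi_{n,1}=(\lambda_{n,1}-\lambda_{n,2})(\lambda_{n,1}-\lambda_{n,3})$, $\xi_{n,2}=(\lambda_{n,1}-\lambda_{n,2})(\lambda_{n,2}-\lambda_{n,3})$, $\xi_{n,3}=(\lambda_{n,1}-\lambda_{n,3})(\lambda_{n,2}-\lambda_{n,3})$; $A_n(t)=\frac{\lambda_{n,2}\lambda_{n,3}}{\xi_{n,1}}e^{\lambda_{n,1}t}-\frac{\lambda_{n,1}\lambda_{n,3}}{\xi_{n,2}}e^{\lambda_{n,2}t}+\frac{\lambda_{n,1}\lambda_{n,2}}{\xi_{n,3}}e^{\lambda_{n,3}t}$, $B_n(t)=-\frac{\lambda_{n,2}+\lambda_{n,3}}{\xi_{n,1}}e^{\lambda_{n,1}t}+\frac{\lambda_{n,1}+\lambda_{n,3}}{\xi_{n,2}}e^{\lambda_{n,2}t}-\frac{\lambda_{n,1}+\lambda_{n,2}}{\xi_{n,3}}e^{\lambda_{n,3}t}$,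 $C_n(t)=\frac{1}{\xi_{n,1}}e^{\lambda_{n,1}t}-\frac{1}{\xi_{n,2}}e^{\lambda_{n,2}t}+\frac{1}{\xi_{n,3}}e^{\lambda_{n,3}t}$. *)

From Stdlib Require Import Reals.
Open Scope R_scope.

Definition cplx : Type := (R * R)%type.
Definition RtoC (r : R) : cplx := (r, 0).
Definition cadd (z w : cplx) : cplx := (fst z + fst w, snd z + snd w).
Definition copp (z : cplx) : cplx := (- fst z, - snd z).
Definition csub (z w : cplx) : cplx := cadd z (copp w).
Definition cmul (z w : cplx) : cplx :=
  (fst z * fst w - snd z * snd w, fst z * snd w + snd z * fst w).
Definition cinv (z : cplx) : cplx :=
  (fst z / (fst z ^ 2 + snd z ^ 2), - snd z / (fst z ^ 2 + snd z ^ 2)).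
Definition cdiv (z w : cplx) : cplx := cmul z (cinv w).
Definition cconj (z : cplx) : cplx := (fst z, - snd z).
Definition cexp (z : cplx) : cplx := (exp (fst z) * cos (snd z), exp (fst z) * sin (snd z)).
Definition cnorm2 (z : cplx) : R := fst z ^ 2 + snd z ^ 2.
Definition cscale (r : R) (z : cplx) : cplx := (r * fst z, r * snd z).

Definition cubic (alpha b c mu : R) (z : cplx) : cplx :=
  cadd (cadd (cadd (cmul z (cmul z z)) (cmul (RtoC alpha) (cmul z z)))
             (cmul (RtoC (b * mu)) z)) (RtoC (c ^ 2 * mu)).

Definition xi1 (l1 l2 l3 : cplx) : cplx := cmul (csub l1 l2) (csub l1 l3).
Definition xi2 (l1 l2 l3 : cplx) : cplx := cmul (csub l1 l2) (csub l2 l3).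
Definition xi3 (l1 l2 l3 : cplx) : cplx := cmul (csub l1 l3) (csub l2 l3).

Definition ecx (l : cplx) (t : R) : cplx := cexp (cmul l (RtoC t)).

Definition Afun (l1 l2 l3 : cplx) (t : R) : cplx :=
  cadd (csub (cmul (cdiv (cmul l2 l3) (xi1 l1 l2 l3)) (ecx l1 t))
             (cmul (cdiv (cmul l1 l3) (xi2 l1 l2 l3)) (ecx l2 t)))
       (cmul (cdiv (cmul l1 l2) (xi3 l1 l2 l3)) (ecx l3 t)).

Definition Bfun (l1 l2 l3 : cplx) (t : R) : cplx :=
  csub (cadd (copp (cmul (cdiv (cadd l2 l3) (xi1 l1 l2 l3)) (ecx l1 t)))
             (cmul (cdiv (cadd l1 l3) (xi2 l1 l2 l3)) (ecx l2 t)))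
       (cmul (cdiv (cadd l1 l2) (xi3 l1 l2 l3)) (ecx l3 t)).

Definition Cfun (l1 l2 l3 : cplx) (t : R) : cplx :=
  cadd (csub (cmul (cinv (xi1 l1 l2 l3)) (ecx l1 t))
             (cmul (cinv (xi2 l1 l2 l3)) (ecx l2 t)))
       (cmul (cinv (xi3 l1 l2 l3)) (ecx l3 t)).

Definition cderiv (f f' : R -> cplx) : Prop :=
  forall t, derivable_pt_lim (fun u => fst (f u)) t (fst (f' t)) /\
            derivable_pt_lim (fun u => snd (f u)) t (snd (f' t)).

(* D_n, E_n, F_n and their derivatives are exponential sums  sum_i a_i lam_i^k e^{lam_i t}
   whose roots lam_i have nonpositive real parts, so their squared moduli are at most
   3 sum_i |a_i|^2 |lam_i|^{2k}.  The cubic pins the roots down: the real root stays in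
   [-alpha, 0], while the complex pair has |lam_2|^2 <= b lam_n and |Im lam_2|^2 >= (b lam_n)/2
   for large n.  Hence every coefficient decays like a fixed power of lam_n and the powers of
   lam_n in the statement exactly compensate; the finitely many small eigenvalues only
   contribute a maximum. *)

From Stdlib Require Import Reals Lra Psatz Lia FunctionalExtensionality.
From Coquelicot Require Import Coquelicot.
Open Scope R_scope.

Fixpoint cpow (z : cplx) (k : nat) : cplx :=
  match k with O => RtoC 1 | S k' => cmul z (cpow z k') end.

Lemma cnorm2_ge0 z : 0 <= cnorm2 z.
Proof. destruct z; unfold cnorm2; simpl; nra. Qed.

Lemma cnorm2_mul z w : cnorm2 (cmul z w) = cnorm2 z * cnorm2 w.
Proof. destruct z, w; unfold cnorm2, cmul; simpl; ring. Qed.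

Lemma cnorm2_opp z : cnorm2 (copp z) = cnorm2 z.
Proof. destruct z; unfold cnorm2, copp; simpl; ring. Qed.

Lemma cnorm2_scale s z : cnorm2 (cscale s z) = s ^ 2 * cnorm2 z.
Proof. destruct z; unfold cnorm2, cscale; simpl; ring. Qed.

Lemma cnorm2_inv z : cnorm2 z <> 0 -> cnorm2 (cinv z) = / cnorm2 z.
Proof.
  destruct z as [x y]; unfold cnorm2, cinv; simpl; intro H; field.
  intro E; apply H; rewrite <- E; ring.
Qed.

Lemma cnorm2_div z w : cnorm2 w <> 0 -> cnorm2 (cdiv z w) = cnorm2 z / cnorm2 w.
Proof. intro H; unfold cdiv; rewrite cnorm2_mul, cnorm2_inv; auto. Qed.

Lemma cnorm2_cpow z k : cnorm2 (cpow z k) = cnorm2 z ^ k.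
Proof.
  induction k as [|k IH]; simpl; [unfold cnorm2; simpl; ring|].
  rewrite cnorm2_mul, IH; ring.
Qed.

Lemma cnorm2_add3 x y z :
  cnorm2 (cadd (cadd x y) z) <= 3 * (cnorm2 x + cnorm2 y + cnorm2 z).
Proof.
  destruct x as [x1 x2], y as [y1 y2], z as [z1 z2]; unfold cnorm2, cadd; simpl.
  pose proof (pow2_ge_0 (x1 - y1)); pose proof (pow2_ge_0 (x1 - z1));
  pose proof (pow2_ge_0 (y1 - z1)); pose proof (pow2_ge_0 (x2 - y2));
  pose proof (pow2_ge_0 (x2 - z2)); pose proof (pow2_ge_0 (y2 - z2)); nra.
Qed.

Lemma cnorm2_ecx_le1 l t : fst l <= 0 -> 0 <= t -> cnorm2 (ecx l t) <= 1.
Proof.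
  destruct l as [a q]; simpl; intros Ha Ht; unfold ecx, cexp, cnorm2, cmul, RtoC; simpl.
  set (x := a * t - q * 0); set (y := a * 0 + q * t).
  assert (Hx : exp x <= 1).
  { assert (Hx0 : x <= 0) by (unfold x; nra).
    destruct (Rle_lt_or_eq_dec x 0 Hx0) as [Hlt | ->]; [|rewrite exp_0; lra].
    rewrite <- exp_0; left; apply exp_increasing; exact Hlt. }
  pose proof (sin2_cos2 y); unfold Rsqr in *; pose proof (exp_pos x); nra.
Qed.

Lemma cscale_1 z : cscale 1 z = z.
Proof. destruct z; unfold cscale; simpl; f_equal; ring. Qed.

Definition expsum (a1 a2 a3 l1 l2 l3 : cplx) (k : nat) (t : R) : cplx :=
  cadd (cadd (cmul (cmul a1 (cpow l1 k)) (ecx l1 t))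
             (cmul (cmul a2 (cpow l2 k)) (ecx l2 t)))
       (cmul (cmul a3 (cpow l3 k)) (ecx l3 t)).

Lemma cderiv_mul_ecx (w l : cplx) :
  cderiv (fun t => cmul w (ecx l t)) (fun t => cmul (cmul w l) (ecx l t)).
Proof.
  destruct w as [w1 w2], l as [a q]; intro t.
  unfold ecx, cexp, cmul, RtoC; simpl; split; apply is_derive_Reals;
    auto_derive; auto; unfold Rminus; ring.
Qed.

Lemma cderiv_add f f' g g' : cderiv f f' -> cderiv g g' ->
  cderiv (fun t => cadd (f t) (g t)) (fun t => cadd (f' t) (g' t)).
Proof.
  intros Hf Hg t; destruct (Hf t), (Hg t); unfold cadd; simpl; split;
    apply derivable_pt_lim_plus; auto.
Qed.

Lemma cderiv_unique f g1 g2 : cderiv f g1 -> cderiv f g2 -> forall t, g1 t = g2 t.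
Proof.
  intros H1 H2 t; destruct (H1 t) as [A1 B1], (H2 t) as [A2 B2].
  pose proof (uniqueness_limite _ _ _ _ A1 A2).
  pose proof (uniqueness_limite _ _ _ _ B1 B2).
  destruct (g1 t), (g2 t); simpl in *; subst; auto.
Qed.

Lemma cderiv_expsum a1 a2 a3 l1 l2 l3 k :
  cderiv (expsum a1 a2 a3 l1 l2 l3 k) (expsum a1 a2 a3 l1 l2 l3 (S k)).
Proof.
  intro t.
  assert (Hterm : forall a l s,
    cmul (cmul (cmul a (cpow l k)) l) (ecx l s) = cmul (cmul a (cpow l (S k))) (ecx l s)).
  { intros [] [] s; simpl; destruct (cpow _ k), (ecx _ s); unfold cmul; simpl; f_equal; ring. }
  unfold expsum; rewrite <- !Hterm.
  exact (cderiv_add _ _ _ _ (cderiv_add _ _ _ _ (cderiv_mul_ecx _ _) (cderiv_mul_ecx _ _))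
           (cderiv_mul_ecx _ _) t).
Qed.

Lemma cderiv_expsum_eq f g a1 a2 a3 l1 l2 l3 k :
  (forall t, f t = expsum a1 a2 a3 l1 l2 l3 k t) -> cderiv f g ->
  forall t, g t = expsum a1 a2 a3 l1 l2 l3 (S k) t.
Proof.
  intros Hf Hg; apply (cderiv_unique f); auto.
  replace f with (expsum a1 a2 a3 l1 l2 l3 k) by (apply functional_extensionality; auto).
  apply cderiv_expsum.
Qed.

Lemma expsum_norm_bound a1 a2 a3 l1 l2 l3 k t :
  fst l1 <= 0 -> fst l2 <= 0 -> fst l3 <= 0 -> 0 <= t ->
  cnorm2 (expsum a1 a2 a3 l1 l2 l3 k t) <=
  3 * (cnorm2 a1 * cnorm2 l1 ^ k + cnorm2 a2 * cnorm2 l2 ^ k + cnorm2 a3 * cnorm2 l3 ^ k).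
Proof.
  intros h1 h2 h3 ht; unfold expsum.
  eapply Rle_trans; [apply cnorm2_add3|]; rewrite !cnorm2_mul, !cnorm2_cpow.
  assert (Hterm : forall a l, fst l <= 0 ->
    cnorm2 a * cnorm2 l ^ k * cnorm2 (ecx l t) <= cnorm2 a * cnorm2 l ^ k).
  { intros a l hl.
    pose proof (cnorm2_ecx_le1 l t hl ht).
    pose proof (Rmult_le_pos _ _ (cnorm2_ge0 a) (pow_le _ k (cnorm2_ge0 l))); nra. }
  pose proof (Hterm a1 l1 h1); pose proof (Hterm a2 l2 h2); pose proof (Hterm a3 l3 h3); lra.
Qed.

Lemma pow_le_shift x L i j : 0 < x -> / x <= L -> (i <= j)%nat ->
  x ^ i <= L ^ (j - i) * x ^ j.
Proof.
  intros hx hL hij.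
  replace (x ^ j) with (x ^ (j - i) * x ^ i)
    by (rewrite <- pow_add; f_equal; lia).
  replace (x ^ i) with ((/ x) ^ (j - i) * (x ^ (j - i) * x ^ i)) at 1
    by (rewrite pow_inv; field; apply pow_nonzero; lra).
  apply Rmult_le_compat_r.
  - apply Rmult_le_pos; apply pow_le; lra.
  - apply pow_incr; split; [left; apply Rinv_0_lt_compat|]; lra.
Qed.

Lemma weighted_term_bound mu L A N a b e i k :
  0 < mu -> 1 <= L -> / mu <= L -> 0 <= A -> A * mu ^ e <= L ->
  0 <= N ^ k <= L ^ k * mu ^ i ->
  (a + i <= b + e)%nat -> (k + (b + e - (a + i)) < 6)%nat ->
  mu ^ a * (A * N ^ k) <= L ^ 6 * mu ^ b.
Proof.
  intros hmu hL hinv hA hAe [hN0 hN] hexp hdeg.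
  pose proof (pow_lt _ a hmu); pose proof (pow_lt _ b hmu); pose proof (pow_lt _ e hmu).
  pose proof (pow_le_shift _ _ _ _ hmu hinv hexp) as hshift.
  set (g := (b + e - (a + i))%nat) in *.
  assert (hLk : 0 <= L ^ k) by (apply pow_le; lra).
  assert (hLg : 0 <= L ^ g) by (apply pow_le; lra).
  assert (hdeg' : L ^ (k + g + 1) <= L ^ 6) by (apply Rle_pow; [lra | unfold g; lia]).
  rewrite !pow_add, pow_1 in hdeg'; rewrite !pow_add in hshift.
  transitivity (L ^ k * (A * (mu ^ a * mu ^ i))).
  { replace (mu ^ a * (A * N ^ k)) with (A * mu ^ a * N ^ k) by ring.
    replace (L ^ k * (A * (mu ^ a * mu ^ i))) with (A * mu ^ a * (L ^ k * mu ^ i)) by ring.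
    apply Rmult_le_compat_l; [apply Rmult_le_pos|]; lra. }
  transitivity (L ^ k * L ^ g * (A * mu ^ e) * mu ^ b).
  { replace (L ^ k * L ^ g * (A * mu ^ e) * mu ^ b)
      with (L ^ k * (A * (L ^ g * (mu ^ b * mu ^ e)))) by ring.
    apply Rmult_le_compat_l; [lra|]; apply Rmult_le_compat_l; lra. }
  apply Rmult_le_compat_r; [lra|].
  transitivity (L ^ k * L ^ g * L); [apply Rmult_le_compat_l; nra|lra].
Qed.

(* The slow mode (a1, l1) has its coefficient decaying like mu^-e1, the two fast modes like
   mu^-e2, with |l2|^2, |l3|^2 = O(mu); the clause [/ mu <= L] lets small mu be covered
   by a larger constant. *)
Definition expsum_profile (L mu : R) (e1 e2 : nat) (a1 a2 a3 l1 l2 l3 : cplx) : Prop :=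
  / mu <= L /\ cnorm2 a1 * mu ^ e1 <= L /\ cnorm2 a2 * mu ^ e2 <= L /\
  cnorm2 a3 * mu ^ e2 <= L /\ cnorm2 l1 <= L /\ cnorm2 l2 <= L * mu /\ cnorm2 l3 <= L * mu.

Lemma expsum_profile_mono L L' mu e1 e2 a1 a2 a3 l1 l2 l3 : 0 < mu -> L <= L' ->
  expsum_profile L mu e1 e2 a1 a2 a3 l1 l2 l3 -> expsum_profile L' mu e1 e2 a1 a2 a3 l1 l2 l3.
Proof. unfold expsum_profile; intros; nra. Qed.

Lemma expsum_profile_exists mu e1 e2 a1 a2 a3 l1 l2 l3 : 0 < mu ->
  exists L, expsum_profile L mu e1 e2 a1 a2 a3 l1 l2 l3.
Proof.
  intro hmu.
  pose proof (cnorm2_ge0 a1); pose proof (cnorm2_ge0 a2); pose proof (cnorm2_ge0 a3).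
  pose proof (cnorm2_ge0 l1); pose proof (cnorm2_ge0 l2); pose proof (cnorm2_ge0 l3).
  pose proof (pow_lt _ e1 hmu); pose proof (pow_lt _ e2 hmu).
  assert (0 <= cnorm2 a1 * mu ^ e1) by (apply Rmult_le_pos; lra).
  assert (0 <= cnorm2 a2 * mu ^ e2) by (apply Rmult_le_pos; lra).
  assert (0 <= cnorm2 a3 * mu ^ e2) by (apply Rmult_le_pos; lra).
  assert (hinv : 0 < / mu) by (apply Rinv_0_lt_compat; lra).
  set (L := / mu + cnorm2 a1 * mu ^ e1 + cnorm2 a2 * mu ^ e2 + cnorm2 a3 * mu ^ e2
             + cnorm2 l1 + cnorm2 l2 / mu + cnorm2 l3 / mu).
  assert (hfast : forall l, 0 <= cnorm2 l / mu <= L -> cnorm2 l <= L * mu).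
  { intros l hl; replace (cnorm2 l) with (cnorm2 l / mu * mu) by (field; lra).
    apply Rmult_le_compat_r; lra. }
  assert (0 <= cnorm2 l2 / mu) by (apply Rmult_le_pos; lra).
  assert (0 <= cnorm2 l3 / mu) by (apply Rmult_le_pos; lra).
  exists L; repeat split; try (apply hfast; split); unfold L; lra.
Qed.

Lemma expsum_scaled_bound L mu e1 e2 a1 a2 a3 l1 l2 l3 k t s a b :
  0 < mu -> 1 <= L -> expsum_profile L mu e1 e2 a1 a2 a3 l1 l2 l3 ->
  fst l1 <= 0 -> fst l2 <= 0 -> fst l3 <= 0 -> 0 <= t ->
  s ^ 2 * mu ^ b = mu ^ a ->
  (a <= b + e1)%nat -> (k + (b + e1 - a) < 6)%nat ->
  (a + k <= b + e2)%nat -> (k + (b + e2 - (a + k)) < 6)%nat ->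
  cnorm2 (cscale s (expsum a1 a2 a3 l1 l2 l3 k t)) <= 9 * L ^ 6.
Proof.
  intros hmu hL (hinv & h1 & h2 & h3 & hl1 & hl2 & hl3) f1 f2 f3 ht hs he1 hd1 he2 hd2.
  pose proof (cnorm2_ge0 l1); pose proof (cnorm2_ge0 l2); pose proof (cnorm2_ge0 l3).
  assert (hslow : 0 <= cnorm2 l1 ^ k <= L ^ k * mu ^ 0).
  { split; [apply pow_le; lra|]; rewrite pow_O, Rmult_1_r; apply pow_incr; lra. }
  assert (hfast : forall l, cnorm2 l <= L * mu -> 0 <= cnorm2 l ^ k <= L ^ k * mu ^ k).
  { intros l hl; pose proof (cnorm2_ge0 l).
    split; [apply pow_le; lra|]; rewrite <- Rpow_mult_distr; apply pow_incr; lra. }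
  pose proof (weighted_term_bound mu L _ _ a b e1 0 k hmu hL hinv (cnorm2_ge0 a1) h1 hslow
                ltac:(lia) ltac:(lia)) as T1.
  pose proof (weighted_term_bound mu L _ _ a b e2 k k hmu hL hinv (cnorm2_ge0 a2) h2
                (hfast l2 hl2) ltac:(lia) ltac:(lia)) as T2.
  pose proof (weighted_term_bound mu L _ _ a b e2 k k hmu hL hinv (cnorm2_ge0 a3) h3
                (hfast l3 hl3) ltac:(lia) ltac:(lia)) as T3.
  pose proof (expsum_norm_bound a1 a2 a3 l1 l2 l3 k t f1 f2 f3 ht) as hX.
  pose proof (pow_lt _ a hmu); pose proof (pow_lt _ b hmu).
  rewrite cnorm2_scale.
  apply Rmult_le_reg_r with (mu ^ b); [lra|].
  replace (s ^ 2 * cnorm2 (expsum a1 a2 a3 l1 l2 l3 k t) * mu ^ b)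
    with (mu ^ a * cnorm2 (expsum a1 a2 a3 l1 l2 l3 k t)) by (rewrite <- hs; ring).
  nra.
Qed.

Lemma cubic_root_relations alpha b c mu r p q :
  cubic alpha b c mu (RtoC r) = RtoC 0 -> cubic alpha b c mu (p, q) = RtoC 0 -> q <> 0 ->
  r = - alpha - 2 * p /\ q ^ 2 = 3 * p ^ 2 + 2 * alpha * p + b * mu /\
  c ^ 2 * mu = - r * (p ^ 2 + q ^ 2).
Proof.
  intros H1 H2 hq; unfold cubic, cadd, cmul, RtoC in H1, H2; simpl in H1, H2.
  injection H1 as Hr _; injection H2 as Hre Him.
  (* Im cubic(p + iq) = q * F1 and Re cubic(p + iq) = F2. *)
  set (F1 := 3 * p ^ 2 - q ^ 2 + 2 * alpha * p + b * mu).
  set (F2 := p ^ 3 - 3 * p * q ^ 2 + alpha * (p ^ 2 - q ^ 2) + b * mu * p + c ^ 2 * mu).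
  assert (HF1 : F1 = 0).
  { apply (Rmult_eq_reg_l q); [|exact hq]; rewrite Rmult_0_r, <- Him; unfold F1; ring. }
  assert (HF2 : F2 = 0) by (rewrite <- Hre; unfold F2; ring).
  assert (Hd : 0 < (r - p) ^ 2 + q ^ 2)
    by (pose proof (pow2_ge_0 (r - p)); pose proof (pow2_gt_0 q hq); lra).
  (* dividing the cubic at r by the quadratic factor with roots p +- iq *)
  assert (Hsum : (r + alpha + 2 * p) * ((r - p) ^ 2 + q ^ 2) = 0).
  { assert (Hcub : r ^ 3 + alpha * r ^ 2 + b * mu * r + c ^ 2 * mu = 0)
      by (rewrite <- Hr; ring).
    transitivity (r ^ 3 + alpha * r ^ 2 + b * mu * r + c ^ 2 * mu - (r - p) * F1 - F2);
      [unfold F1, F2; ring|].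
    rewrite Hcub, HF1, HF2; ring. }
  assert (Hr' : r = - alpha - 2 * p).
  { destruct (Rmult_integral _ _ Hsum); lra. }
  split; [exact Hr'|split; [unfold F1 in HF1; lra|]].
  transitivity (F2 - p * F1 + (alpha + 2 * p) * (p ^ 2 + q ^ 2)); [unfold F1, F2; ring|].
  rewrite HF1, HF2, Hr'; ring.
Qed.

Lemma cubic_root_bounds alpha b c mu r p q :
  0 < b -> 0 < alpha - c ^ 2 / b -> 0 < mu -> q <> 0 ->
  r = - alpha - 2 * p -> q ^ 2 = 3 * p ^ 2 + 2 * alpha * p + b * mu ->
  c ^ 2 * mu = - r * (p ^ 2 + q ^ 2) ->
  r <= 0 /\ p <= 0 /\ r ^ 2 <= alpha ^ 2 /\ p ^ 2 <= alpha ^ 2 /\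
  p ^ 2 + q ^ 2 <= b * mu /\ 2 * b * mu - alpha ^ 2 <= 2 * q ^ 2.
Proof.
  intros hb hg hmu hq Hr Hq Hc.
  assert (Hcb : c ^ 2 < alpha * b).
  { assert (c ^ 2 / b * b = c ^ 2) by (field; lra); nra. }
  pose proof (pow2_ge_0 c); pose proof (pow2_ge_0 p); pose proof (pow2_gt_0 q hq).
  assert (Ha : 0 < alpha) by nra.
  assert (Hr0 : r <= 0) by nra.
  (* r < -alpha would force c^2 mu > alpha b mu *)
  assert (Hp0 : p <= 0).
  { destruct (Rle_or_lt p 0) as [|Hp]; [assumption|exfalso].
    assert (p ^ 2 + q ^ 2 = b * mu + 4 * p ^ 2 + 2 * alpha * p) by lra.
    assert (alpha * b * mu < c ^ 2 * mu) by (rewrite Hc, Hr; nra).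
    nra. }
  repeat split; nra.
Qed.

Lemma cubic_roots_bounds alpha b c mu r z :
  0 < b -> 0 < alpha - c ^ 2 / b -> 0 < mu ->
  cubic alpha b c mu (RtoC r) = RtoC 0 -> cubic alpha b c mu z = RtoC 0 -> snd z <> 0 ->
  r <= 0 /\ fst z <= 0 /\ r ^ 2 <= alpha ^ 2 /\ fst z ^ 2 <= alpha ^ 2 /\
  fst z ^ 2 + snd z ^ 2 <= b * mu /\ 2 * b * mu - alpha ^ 2 <= 2 * snd z ^ 2.
Proof.
  destruct z as [p q]; simpl; intros hb hg hmu H1 H2 hq.
  destruct (cubic_root_relations _ _ _ _ _ _ _ H1 H2 hq) as (e1 & e2 & e3).
  exact (cubic_root_bounds _ _ _ _ _ _ _ hb hg hmu hq e1 e2 e3).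
Qed.

Lemma Afun_expsum l1 l2 l3 t :
  Afun l1 l2 l3 t =
  expsum (cdiv (cmul l2 l3) (xi1 l1 l2 l3)) (copp (cdiv (cmul l1 l3) (xi2 l1 l2 l3)))
         (cdiv (cmul l1 l2) (xi3 l1 l2 l3)) l1 l2 l3 0 t.
Proof.
  unfold Afun, expsum; simpl.
  generalize (cdiv (cmul l2 l3) (xi1 l1 l2 l3)) (cdiv (cmul l1 l3) (xi2 l1 l2 l3))
             (cdiv (cmul l1 l2) (xi3 l1 l2 l3)) (ecx l1 t) (ecx l2 t) (ecx l3 t).
  intros [] [] [] [] [] []; unfold cadd, csub, copp, cmul, RtoC; simpl; f_equal; ring.
Qed.

Lemma Bfun_opp_expsum l1 l2 l3 t :
  copp (Bfun l1 l2 l3 t) =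
  expsum (cdiv (cadd l2 l3) (xi1 l1 l2 l3)) (copp (cdiv (cadd l1 l3) (xi2 l1 l2 l3)))
         (cdiv (cadd l1 l2) (xi3 l1 l2 l3)) l1 l2 l3 0 t.
Proof.
  unfold Bfun, expsum; simpl.
  generalize (cdiv (cadd l2 l3) (xi1 l1 l2 l3)) (cdiv (cadd l1 l3) (xi2 l1 l2 l3))
             (cdiv (cadd l1 l2) (xi3 l1 l2 l3)) (ecx l1 t) (ecx l2 t) (ecx l3 t).
  intros [] [] [] [] [] []; unfold cadd, csub, copp, cmul, RtoC; simpl; f_equal; ring.
Qed.

Lemma Cfun_expsum l1 l2 l3 t :
  Cfun l1 l2 l3 t =
  expsum (cinv (xi1 l1 l2 l3)) (copp (cinv (xi2 l1 l2 l3))) (cinv (xi3 l1 l2 l3))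
         l1 l2 l3 0 t.
Proof.
  unfold Cfun, expsum; simpl.
  generalize (cinv (xi1 l1 l2 l3)) (cinv (xi2 l1 l2 l3)) (cinv (xi3 l1 l2 l3))
             (ecx l1 t) (ecx l2 t) (ecx l3 t).
  intros [] [] [] [] [] []; unfold cadd, csub, copp, cmul, RtoC; simpl; f_equal; ring.
Qed.

Definition resolvent_profile (L mu : R) (l1 l2 l3 : cplx) : Prop :=
  expsum_profile L mu 0 1 (cdiv (cmul l2 l3) (xi1 l1 l2 l3))
    (copp (cdiv (cmul l1 l3) (xi2 l1 l2 l3))) (cdiv (cmul l1 l2) (xi3 l1 l2 l3)) l1 l2 l3 /\
  expsum_profile L mu 0 1 (cdiv (cadd l2 l3) (xi1 l1 l2 l3))
    (copp (cdiv (cadd l1 l3) (xi2 l1 l2 l3))) (cdiv (cadd l1 l2) (xi3 l1 l2 l3)) l1 l2 l3 /\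
  expsum_profile L mu 2 2 (cinv (xi1 l1 l2 l3))
    (copp (cinv (xi2 l1 l2 l3))) (cinv (xi3 l1 l2 l3)) l1 l2 l3.

Lemma resolvent_profile_mono L L' mu l1 l2 l3 : 0 < mu -> L <= L' ->
  resolvent_profile L mu l1 l2 l3 -> resolvent_profile L' mu l1 l2 l3.
Proof.
  intros hmu hL (hA & hB & hC); split; [|split]; eapply expsum_profile_mono; eauto.
Qed.

Lemma resolvent_profile_exists mu l1 l2 l3 : 0 < mu -> exists L, resolvent_profile L mu l1 l2 l3.
Proof.
  intro hmu.
  destruct (expsum_profile_exists mu 0 1 (cdiv (cmul l2 l3) (xi1 l1 l2 l3))
    (copp (cdiv (cmul l1 l3) (xi2 l1 l2 l3))) (cdiv (cmul l1 l2) (xi3 l1 l2 l3)) l1 l2 l3 hmu)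
    as [LA hA].
  destruct (expsum_profile_exists mu 0 1 (cdiv (cadd l2 l3) (xi1 l1 l2 l3))
    (copp (cdiv (cadd l1 l3) (xi2 l1 l2 l3))) (cdiv (cadd l1 l2) (xi3 l1 l2 l3)) l1 l2 l3 hmu)
    as [LB hB].
  destruct (expsum_profile_exists mu 2 2 (cinv (xi1 l1 l2 l3))
    (copp (cinv (xi2 l1 l2 l3))) (cinv (xi3 l1 l2 l3)) l1 l2 l3 hmu) as [LC hC].
  pose proof (Rmax_l LB LC); pose proof (Rmax_r LB LC).
  pose proof (Rmax_l LA (Rmax LB LC)); pose proof (Rmax_r LA (Rmax LB LC)).
  exists (Rmax LA (Rmax LB LC)); split; [|split].
  - apply (expsum_profile_mono LA); auto; lra.
  - apply (expsum_profile_mono LB); auto; lra.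
  - apply (expsum_profile_mono LC); auto; lra.
Qed.

Lemma resolvent_derivative_bounds (mu L : R) (l1 l2 l3 : cplx) :
  0 < mu -> 1 <= L -> resolvent_profile L mu l1 l2 l3 ->
  fst l1 <= 0 -> fst l2 <= 0 -> fst l3 <= 0 ->
  forall (D1 D2 E1 E2 F1 F2 : R -> cplx),
    let D := Afun l1 l2 l3 in
    let E := fun t => copp (Bfun l1 l2 l3 t) in
    let F := Cfun l1 l2 l3 in
    cderiv D D1 -> cderiv D1 D2 -> cderiv E E1 -> cderiv E1 E2 ->
    cderiv F F1 -> cderiv F1 F2 ->
    forall t, 0 <= t ->
      Rmax (cnorm2 (D t)) (Rmax (cnorm2 (D1 t))
        (Rmax (cnorm2 (cscale (/ sqrt mu) (D2 t)))
              (cnorm2 (cscale (/ (mu * sqrt mu)) (D2 t))))) <= 9 * L ^ 6 /\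
      Rmax (cnorm2 (E t)) (Rmax (cnorm2 (E1 t))
        (Rmax (cnorm2 (cscale (/ sqrt mu) (E2 t)))
              (cnorm2 (cscale (/ (mu * sqrt mu)) (E2 t))))) <= 9 * L ^ 6 /\
      Rmax (cnorm2 (cscale (sqrt mu) (F t)))
        (Rmax (cnorm2 (cscale mu (F t)))
          (Rmax (cnorm2 (cscale (sqrt mu) (F1 t)))
            (Rmax (cnorm2 (F2 t))
                  (cnorm2 (cscale (/ sqrt mu) (F2 t)))))) <= 9 * L ^ 6.
Proof.
  intros hmu hL (pA & pB & pC) f1 f2 f3 D1 D2 E1 E2 F1 F2 D E F
    HD1 HD2 HE1 HE2 HF1 HF2 t ht.
  pose proof (cderiv_expsum_eq _ _ _ _ _ _ _ _ _ (Afun_expsum l1 l2 l3) HD1) as hD1.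
  pose proof (cderiv_expsum_eq _ _ _ _ _ _ _ _ _ hD1 HD2) as hD2.
  pose proof (cderiv_expsum_eq _ _ _ _ _ _ _ _ _ (Bfun_opp_expsum l1 l2 l3) HE1) as hE1.
  pose proof (cderiv_expsum_eq _ _ _ _ _ _ _ _ _ hE1 HE2) as hE2.
  pose proof (cderiv_expsum_eq _ _ _ _ _ _ _ _ _ (Cfun_expsum l1 l2 l3) HF1) as hF1.
  pose proof (cderiv_expsum_eq _ _ _ _ _ _ _ _ _ hF1 HF2) as hF2.
  unfold D, E, F.
  rewrite Afun_expsum, Bfun_opp_expsum, Cfun_expsum, hD1, hD2, hE1, hE2, hF1, hF2.
  assert (hsq : sqrt mu ^ 2 = mu) by (apply pow2_sqrt; lra).
  assert (s1 : 1 ^ 2 * mu ^ 0 = mu ^ 0) by ring.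
  assert (s2 : (/ sqrt mu) ^ 2 * mu ^ 1 = mu ^ 0)
    by (rewrite pow_inv, hsq; field; lra).
  assert (s3 : (/ (mu * sqrt mu)) ^ 2 * mu ^ 3 = mu ^ 0)
    by (rewrite pow_inv, Rpow_mult_distr, hsq; field; lra).
  assert (s4 : sqrt mu ^ 2 * mu ^ 0 = mu ^ 1) by (rewrite hsq; ring).
  assert (s5 : mu ^ 2 * mu ^ 0 = mu ^ 2) by ring.
  repeat split; repeat apply Rmax_lub;
    (lazymatch goal with
     | |- cnorm2 (cscale _ _) <= _ => idtac
     | |- cnorm2 ?z <= _ => rewrite <- (cscale_1 z)
     end);
    (eapply expsum_scaled_bound; [exact hmu | exact hL | eassumption | exact f1 | exact f2
      | exact f3 | exact ht | first [exact s1 | exact s2 | exact s3 | exact s4 | exact s5]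
      | lia | lia | lia | lia]).
Qed.

Lemma resolvent_coefficient_norms r p q : q <> 0 ->
  let l1 := RtoC r in let l2 := (p, q) in let l3 := cconj (p, q) in
  let m := p ^ 2 + q ^ 2 in let d := (r - p) ^ 2 + q ^ 2 in
  cnorm2 l1 = r ^ 2 /\ cnorm2 l2 = m /\ cnorm2 l3 = m /\
  cnorm2 (cdiv (cmul l2 l3) (xi1 l1 l2 l3)) = m * m / (d * d) /\
  cnorm2 (copp (cdiv (cmul l1 l3) (xi2 l1 l2 l3))) = r ^ 2 * m / (d * (4 * q ^ 2)) /\
  cnorm2 (cdiv (cmul l1 l2) (xi3 l1 l2 l3)) = r ^ 2 * m / (d * (4 * q ^ 2)) /\
  cnorm2 (cdiv (cadd l2 l3) (xi1 l1 l2 l3)) = 4 * p ^ 2 / (d * d) /\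
  cnorm2 (copp (cdiv (cadd l1 l3) (xi2 l1 l2 l3))) = ((r + p) ^ 2 + q ^ 2) / (d * (4 * q ^ 2)) /\
  cnorm2 (cdiv (cadd l1 l2) (xi3 l1 l2 l3)) = ((r + p) ^ 2 + q ^ 2) / (d * (4 * q ^ 2)) /\
  cnorm2 (cinv (xi1 l1 l2 l3)) = 1 / (d * d) /\
  cnorm2 (copp (cinv (xi2 l1 l2 l3))) = 1 / (d * (4 * q ^ 2)) /\
  cnorm2 (cinv (xi3 l1 l2 l3)) = 1 / (d * (4 * q ^ 2)).
Proof.
  intros hq l1 l2 l3 m d.
  pose proof (pow2_gt_0 q hq).
  assert (hd : 0 < d) by (unfold d; pose proof (pow2_ge_0 (r - p)); lra).
  assert (x1 : cnorm2 (xi1 l1 l2 l3) = d * d).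
  { unfold xi1; rewrite cnorm2_mul; unfold d, l1, l2, l3, cnorm2, csub, cadd, copp, cconj, RtoC;
      simpl; ring. }
  assert (x2 : cnorm2 (xi2 l1 l2 l3) = d * (4 * q ^ 2)).
  { unfold xi2; rewrite cnorm2_mul; unfold d, l1, l2, l3, cnorm2, csub, cadd, copp, cconj, RtoC;
      simpl; ring. }
  assert (x3 : cnorm2 (xi3 l1 l2 l3) = d * (4 * q ^ 2)).
  { unfold xi3; rewrite cnorm2_mul; unfold d, l1, l2, l3, cnorm2, csub, cadd, copp, cconj, RtoC;
      simpl; ring. }
  assert (n1 : cnorm2 (xi1 l1 l2 l3) <> 0) by (rewrite x1; nra).
  assert (n2 : cnorm2 (xi2 l1 l2 l3) <> 0) by (rewrite x2; nra).
  assert (n3 : cnorm2 (xi3 l1 l2 l3) <> 0) by (rewrite x3; nra).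
  repeat split; rewrite ?cnorm2_opp, ?cnorm2_div, ?cnorm2_inv, ?x1, ?x2, ?x3; auto;
    unfold Rdiv; rewrite ?Rmult_1_l; try reflexivity; f_equal;
    unfold m, l1, l2, l3, cnorm2, cmul, cadd, cconj, RtoC; simpl; ring.
Qed.

Lemma resolvent_norm_estimates alpha b mu r p q :
  0 < b -> 1 <= mu -> q <> 0 -> r ^ 2 <= alpha ^ 2 -> p ^ 2 <= alpha ^ 2 ->
  p ^ 2 + q ^ 2 <= b * mu -> b * mu <= 2 * q ^ 2 ->
  let m := p ^ 2 + q ^ 2 in let d := (r - p) ^ 2 + q ^ 2 in let u := / b in
  m * m / (d * d) * mu ^ 0 <= 4 /\
  r ^ 2 * m / (d * (4 * q ^ 2)) * mu ^ 1 <= alpha ^ 2 * u /\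
  4 * p ^ 2 / (d * d) * mu ^ 0 <= 16 * alpha ^ 2 * u ^ 2 /\
  ((r + p) ^ 2 + q ^ 2) / (d * (4 * q ^ 2)) * mu ^ 1 <= 4 * alpha ^ 2 * u ^ 2 + u / 2 /\
  1 / (d * d) * mu ^ 2 <= 4 * u ^ 2 /\
  1 / (d * (4 * q ^ 2)) * mu ^ 2 <= u ^ 2.
Proof.
  intros hb hmu hq hr hp hm hq2 m d u; fold m in hm.
  assert (hu : 0 < u) by (apply Rinv_0_lt_compat; lra).
  pose proof (pow2_ge_0 alpha).
  pose proof (pow2_gt_0 q hq); pose proof (pow2_ge_0 r); pose proof (pow2_ge_0 p).
  assert (hm0 : 0 <= m) by (unfold m; lra).
  assert (hdq : q ^ 2 <= d) by (unfold d; pose proof (pow2_ge_0 (r - p)); lra).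
  assert (hbu : b * u = 1) by (unfold u; field; lra).
  (* q^2, m and d are all comparable to mu *)
  assert (hmq : m <= 2 * q ^ 2) by lra.
  assert (hmuq : mu <= 2 * u * q ^ 2) by nra.
  assert (hq1 : b <= 2 * q ^ 2) by nra.
  assert (hS : (r + p) ^ 2 + q ^ 2 <= 4 * alpha ^ 2 + q ^ 2)
    by (pose proof (pow2_ge_0 (r - p)); nra).
  assert (hd : 0 < d) by lra.
  assert (hdd : 0 < d * d) by nra.
  assert (hdq4 : 0 < d * (4 * q ^ 2)) by nra.
  repeat split.
  - rewrite pow_O, Rmult_1_r; apply Rle_div_l; [lra|].
    assert (m <= 2 * d) by lra; nra.
  - rewrite pow_1; unfold Rdiv; rewrite Rmult_assoc, (Rmult_comm (/ _)), <- Rmult_assoc.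
    apply Rle_div_l; [lra|].
    assert (r ^ 2 * m <= alpha ^ 2 * (2 * q ^ 2)) by (apply Rmult_le_compat; lra).
    assert (r ^ 2 * m * mu <= alpha ^ 2 * (2 * q ^ 2) * (2 * u * q ^ 2))
      by (apply Rmult_le_compat; nra).
    assert (q ^ 2 * q ^ 2 <= d * q ^ 2) by nra.
    assert (0 <= alpha ^ 2 * u) by nra.
    nra.
  - rewrite pow_O, Rmult_1_r; apply Rle_div_l; [lra|].
    assert (1 <= 2 * u * d) by nra.
    assert (1 <= (2 * u * d) ^ 2) by nra.
    nra.
  - rewrite pow_1; unfold Rdiv; rewrite Rmult_assoc, (Rmult_comm (/ _)), <- Rmult_assoc.
    apply Rle_div_l; [lra|].
    assert (1 <= 2 * u * q ^ 2) by nra.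
    pose proof (pow2_ge_0 (r + p)).
    assert (((r + p) ^ 2 + q ^ 2) * mu <= (4 * alpha ^ 2 + q ^ 2) * (2 * u * q ^ 2))
      by (apply Rmult_le_compat; nra).
    assert (q ^ 2 * q ^ 2 <= d * q ^ 2) by nra.
    assert (1 <= 2 * u * d) by nra.
    assert (0 <= alpha ^ 2 * u * q ^ 2) by (apply Rmult_le_pos; nra).
    nra.
  - replace (1 / (d * d) * mu ^ 2) with (mu ^ 2 / (d * d)) by (field; lra).
    apply Rle_div_l; [lra|].
    assert (mu ^ 2 <= (2 * u * d) ^ 2) by (apply pow_incr; nra).
    nra.
  - replace (1 / (d * (4 * q ^ 2)) * mu ^ 2) with (mu ^ 2 / (d * (4 * q ^ 2)))
      by (field; lra).
    apply Rle_div_l; [lra|].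
    assert (mu ^ 2 <= (2 * u * q ^ 2) ^ 2) by (apply pow_incr; nra).
    nra.
Qed.

Lemma resolvent_profile_large alpha b : 0 < b ->
  exists L, 1 <= L /\
    forall mu r p q, 1 <= mu -> q <> 0 -> r ^ 2 <= alpha ^ 2 -> p ^ 2 <= alpha ^ 2 ->
      p ^ 2 + q ^ 2 <= b * mu -> b * mu <= 2 * q ^ 2 ->
      resolvent_profile L mu (RtoC r) (p, q) (cconj (p, q)).
Proof.
  intro hb.
  assert (hu : 0 < / b) by (apply Rinv_0_lt_compat; lra).
  pose proof (pow2_ge_0 alpha); pose proof (pow2_ge_0 (/ b)).
  exists (4 + b + alpha ^ 2 + (1 + alpha ^ 2) * (/ b + 16 * (/ b) ^ 2)).
  split; [nra|].
  intros mu r p q hmu hq hr hp hm hq2.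
  destruct (resolvent_coefficient_norms r p q hq)
    as (e1 & e2 & e3 & eD1 & eD2 & eD3 & eE1 & eE2 & eE3 & eF1 & eF2 & eF3).
  destruct (resolvent_norm_estimates alpha b mu r p q hb hmu hq hr hp hm hq2)
    as (bD1 & bD2 & bE1 & bE2 & bF1 & bF2).
  assert (bmu : / mu <= 1) by (rewrite <- Rinv_1; apply Rinv_le_contravar; lra).
  assert (b * mu <= (4 + b + alpha ^ 2 + (1 + alpha ^ 2) * (/ b + 16 * (/ b) ^ 2)) * mu)
    by (apply Rmult_le_compat_r; nra).
  unfold resolvent_profile, expsum_profile.
  rewrite e1, e2, e3, eD1, eD2, eD3, eE1, eE2, eE3, eF1, eF2, eF3.
  repeat split; nra.
Qed.

Lemma upward_closed_common_bound (P : nat -> R -> Prop) (N : nat) :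
  (forall n L L', L <= L' -> P n L -> P n L') -> (forall n, exists L, P n L) ->
  exists L, forall n, (n < N)%nat -> P n L.
Proof.
  intros Hmono Hex; induction N as [|N [L HL]].
  - exists 0; intros; lia.
  - destruct (Hex N) as [LN HN]; exists (Rmax L LN); intros n hn.
    destruct (Nat.eq_dec n N) as [->|hne].
    + exact (Hmono _ _ _ (Rmax_r _ _) HN).
    + exact (Hmono _ _ _ (Rmax_l _ _) (HL n ltac:(lia))).
Qed.

Lemma resolvent_profile_uniform alpha b (lam r1 : nat -> R) (r2 : nat -> cplx) :
  0 < b -> (forall n, 0 < lam n) -> Un_growing lam -> (forall M, exists n, M < lam n) ->
  (forall n, snd (r2 n) <> 0 /\ r1 n ^ 2 <= alpha ^ 2 /\ fst (r2 n) ^ 2 <= alpha ^ 2 /\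
     fst (r2 n) ^ 2 + snd (r2 n) ^ 2 <= b * lam n /\
     2 * b * lam n - alpha ^ 2 <= 2 * snd (r2 n) ^ 2) ->
  exists L, 1 <= L /\
    forall n, resolvent_profile L (lam n) (RtoC (r1 n)) (r2 n) (cconj (r2 n)).
Proof.
  intros hb hlam_pos hlam_mono hlam_inf Hroots.
  set (P n L := resolvent_profile L (lam n) (RtoC (r1 n)) (r2 n) (cconj (r2 n))).
  assert (HPmono : forall n L L', L <= L' -> P n L -> P n L')
    by (intros n L L'; apply resolvent_profile_mono, hlam_pos).
  destruct (resolvent_profile_large alpha b hb) as (L1 & hL1 & HL1).
  assert (hab : 0 <= alpha ^ 2 / b)
    by (apply Rmult_le_pos; [apply pow2_ge_0 | left; apply Rinv_0_lt_compat; lra]).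
  assert (hab' : alpha ^ 2 / b * b = alpha ^ 2) by (field; lra).
  destruct (hlam_inf (1 + alpha ^ 2 / b)) as [n0 Hn0].
  destruct (upward_closed_common_bound P n0 HPmono
              (fun n => resolvent_profile_exists _ _ _ _ (hlam_pos n))) as [L0 HL0].
  exists (Rmax L1 L0); split; [eapply Rle_trans; [exact hL1 | apply Rmax_l]|].
  intro n; destruct (Nat.lt_ge_cases n n0) as [hn|hn].
  - exact (HPmono _ _ _ (Rmax_r _ _) (HL0 n hn)).
  - apply (HPmono _ L1); [apply Rmax_l|].
    pose proof (tech9 lam hlam_mono n0 n hn).
    assert (alpha ^ 2 <= b * lam n) by nra.
    destruct (Hroots n) as (hq & hr & hp & hm & hq2).
    unfold P; rewrite (surjective_pairing (r2 n)).
    apply HL1; auto; nra.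
Qed.

Theorem lemma4p5 (T alpha b c : R) (lam : nat -> R) (r1 : nat -> R) (r2 : nat -> cplx)
  (hT : 0 < T) (hb : 0 < b) (hgamma : 0 < alpha - c ^ 2 / b)
  (hlam_pos : forall n, 0 < lam n)
  (hlam_mono : forall n, lam n <= lam (S n))
  (hlam_inf : forall M, exists n, M < lam n)
  (hr1 : forall n, cubic alpha b c (lam n) (RtoC (r1 n)) = RtoC 0)
  (hr2 : forall n, cubic alpha b c (lam n) (r2 n) = RtoC 0)
  (hr2_nonreal : forall n, snd (r2 n) <> 0) :
  exists K : R, 0 < K /\
    forall (n : nat) (D1 D2 E1 E2 F1 F2 : R -> cplx),
      let D := Afun (RtoC (r1 n)) (r2 n) (cconj (r2 n)) in
      let E := fun t => copp (Bfun (RtoC (r1 n)) (r2 n) (cconj (r2 n)) t) in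
      let F := Cfun (RtoC (r1 n)) (r2 n) (cconj (r2 n)) in
      cderiv D D1 -> cderiv D1 D2 ->
      cderiv E E1 -> cderiv E1 E2 ->
      cderiv F F1 -> cderiv F1 F2 ->
      forall t, 0 <= t <= T ->
        Rmax (cnorm2 (D t)) (Rmax (cnorm2 (D1 t))
          (Rmax (cnorm2 (cscale (/ sqrt (lam n)) (D2 t)))
                (cnorm2 (cscale (/ (lam n * sqrt (lam n))) (D2 t))))) <= K /\
        Rmax (cnorm2 (E t)) (Rmax (cnorm2 (E1 t))
          (Rmax (cnorm2 (cscale (/ sqrt (lam n)) (E2 t)))
                (cnorm2 (cscale (/ (lam n * sqrt (lam n))) (E2 t))))) <= K /\
        Rmax (cnorm2 (cscale (sqrt (lam n)) (F t)))
          (Rmax (cnorm2 (cscale (lam n) (F t)))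
            (Rmax (cnorm2 (cscale (sqrt (lam n)) (F1 t)))
              (Rmax (cnorm2 (F2 t))
                    (cnorm2 (cscale (/ sqrt (lam n)) (F2 t)))))) <= K.
Proof.
  assert (Hroots : forall n, r1 n <= 0 /\ fst (r2 n) <= 0 /\ r1 n ^ 2 <= alpha ^ 2 /\
    fst (r2 n) ^ 2 <= alpha ^ 2 /\ fst (r2 n) ^ 2 + snd (r2 n) ^ 2 <= b * lam n /\
    2 * b * lam n - alpha ^ 2 <= 2 * snd (r2 n) ^ 2)
    by (intro n; exact (cubic_roots_bounds _ _ _ _ _ _ hb hgamma (hlam_pos n) (hr1 n) (hr2 n)
                          (hr2_nonreal n))).
  destruct (resolvent_profile_uniform alpha b lam r1 r2 hb hlam_pos hlam_mono hlam_inf)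
    as (L & hL & HP).
  { intro n; destruct (Hroots n) as (_ & _ & H); exact (conj (hr2_nonreal n) H). }
  exists (9 * L ^ 6); split; [pose proof (pow_lt L 6 ltac:(lra)); lra|].
  intros n D1 D2 E1 E2 F1 F2 D E F HD1 HD2 HE1 HE2 HF1 HF2 t [ht _].
  destruct (Hroots n) as (hr & hp & _).
  exact (resolvent_derivative_bounds (lam n) L _ _ _ (hlam_pos n) hL (HP n) hr hp hp
           D1 D2 E1 E2 F1 F2 HD1 HD2 HE1 HE2 HF1 HF2 t ht).
Qed.
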